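(* For every positive integer $n$, the number of ordered set partitions of $[n]$ into exactly $3$ blocks that avoid the pattern $132$ is $$\operatorname{op}_{n,3}(132) = \left(\frac{n^2}{8}+\frac{3n}{8}-2\right)2^n+3.$$
   Context: An ordered set partition of $[n]$ into $k$ blocks is a sequence $B_1/B_2/\cdots/B_k$ of nonempty, pairwise disjoint subsets of $[n]$ whose union is $[n]$; the order of the blocks matters, but not the order of elements within a block. For a permutation $\rho=\rho_1\cdots\rho_m\in\mathcal{S}_m$, an ordered partition $B_1/\cdots/B_k$ contains $\rho$ if there are block indices $i_1<i_2<\cdots<i_m$ and elements $b_j\in B_{i_j}$ such that $b_1\cdots b_m$ is order-isomorphic to $\rho$ (i.e. $b_a<b_c$ iff $\rho_a<\rho_c$); otherwise it avoids $\rho$. $\operatorname{op}_{n,k}(\rho)$ denotes the number of ordered partitions of $[n]$ into $k$ blocks that avoid $\rho$. *)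

From mathcomp Require Import all_boot all_order all_algebra.
Set Implicit Arguments. Unset Strict Implicit. Unset Printing Implicit Defensive.

(* [n] = {1,...,n} is represented by 'I_n = {0,...,n-1} (order-preserving shift).
   An ordered set partition into k blocks is a k-tuple of sets B : 'I_k -> {set 'I_n}
   (block B i is the (i+1)-th block), nonempty, pairwise disjoint, covering. *)
Definition is_ordered_partition (n k : nat) (B : {ffun 'I_k -> {set 'I_n}}) : bool :=
  [&& [forall i, B i != set0],
      [forall i, forall j, (i != j) ==> [disjoint B i & B j]] &
      \bigcup_(i < k) B i == [set: 'I_n]].

Definition op_contains (n k : nat) (B : {ffun 'I_k -> {set 'I_n}}) (rho : seq nat) : bool :=
  [exists idx : {ffun 'I_(size rho) -> 'I_k},
    [exists b : {ffun 'I_(size rho) -> 'I_n},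
      [&& [forall a : 'I_(size rho), forall c : 'I_(size rho),
              (a < c)%N ==> (idx a < idx c)%N],
          [forall j, b j \in B (idx j)] &
          [forall a : 'I_(size rho), forall c : 'I_(size rho),
              (b a < b c)%N == (nth 0%N rho a < nth 0%N rho c)%N]]]].

Definition op_count (n k : nat) (rho : seq nat) : nat :=
  #|[set B : {ffun 'I_k -> {set 'I_n}} |
      is_ordered_partition B && ~~ op_contains B rho]|.

Definition pat132 : seq nat := [:: 1; 3; 2]%N.

From mathcomp Require Import all_boot all_order all_algebra zify lra.

(* Record an ordered partition B_1/B_2/B_3 of [n] as the word over {0,1,2}
   whose x-th letter is the block containing x.  Ordered partitions are then
   the surjective words, and a copy of 132 in the partition is exactly an
   occurrence of the subsequence 0 2 1 in the word.  Splitting off the first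
   letter shows that the words avoiding a fixed subsequence of length k over a
   3-letter alphabet satisfy A_k(n+1) = 2 A_k(n) + A_(k-1)(n), whence
   A_3(n) = 2^n (n^2 + 3n + 8) / 8.  Every non-surjective word avoids 0 2 1, and
   there are 3 * 2^n - 3 of them when n > 0. *)

Section SubseqNth.

Context {T : eqType} (x0 : T).

Lemma subseq2P a b s :
  subseq [:: a; b] s <->
  exists i j, [/\ i < j < size s, nth x0 s i = a & nth x0 s j = b].
Proof.
elim: s => [|y s IH] /=; first by split=> // -[i [j [/andP []]]].
case: eqP => [<-|ya].
  rewrite sub1seq; split => [/(nthP x0) [j js sj]|[i [[|j] [/andP [ij js] _ sj]]]] //.
    by exists 0, j.+1.
  by apply/(nthP x0); exists j.
split => [/IH [i [j [ij_s si sj]]]|[[|i] [j [ij_s si sj]]]].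
- by exists i.+1, j.+1.
- by case: ya.
- by case: j ij_s sj => // j ij_s sj; apply/IH; exists i, j.
Qed.

Lemma subseq3P a b c s :
  subseq [:: a; b; c] s <->
  exists i j l, [/\ i < j < l, l < size s
                 & [/\ nth x0 s i = a, nth x0 s j = b & nth x0 s l = c]].
Proof.
elim: s => [|y s IH] /=; first by split=> // -[i [j [l [_]]]].
case: eqP => [<-|ya].
  split => [/subseq2P [j [l [/andP [jl ls] sj sl]]]|
            [i [[|j] [[|l] [/andP [ij jl] ls [_ sj sl]]]]]] //.
    by exists 0, j.+1, l.+1.
  by apply/subseq2P; exists j, l; rewrite ltnS in jl ls; rewrite jl.
split => [/IH [i [j [l [ijl ls [si sj sl]]]]]|[[|i] [j [l [ijl ls [si sj sl]]]]]].
- by exists i.+1, j.+1, l.+1.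
- by case: ya.
- case/andP: ijl => ij jl.
  case: j ij jl sj => // j ij jl sj; case: l jl ls sl => // l jl ls sl.
  by apply/IH; exists i, j, l; split => //; apply/andP.
Qed.

End SubseqNth.

Section Words.

Context {T : finType}.

Lemma card_tuples_cons n (P : pred (seq T)) :
  #|[set t : n.+1.-tuple T | P t]| = \sum_(a : T) #|[set t : n.-tuple T | P (a :: t)]|.
Proof.
rewrite -sum1_card (partition_big (@thead _ _) predT) //=.
apply: eq_bigr => a _.
have cons_inj : injective (fun t : n.-tuple T => [tuple of a :: t]).
  by move=> t1 t2 /(congr1 val) [/val_inj].
rewrite -(card_imset _ cons_inj) -sum1_card; apply: eq_bigl => t; rewrite !inE.
apply/andP/imsetP => [[Pt /eqP <-]|[u]].
  exists (behead_tuple t); last exact: tuple_eta.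
  by rewrite inE; move: Pt; rewrite {1}(tuple_eta t).
by rewrite inE => Pu ->; rewrite /thead tnth0.
Qed.

Lemma card_tuples0 (P : pred (seq T)) : #|[set t : 0.-tuple T | P t]| = P [::].
Proof.
have -> : [set t : 0.-tuple T | P t] = if P [::] then setT else set0.
  by apply/setP => t; rewrite (tuple0 t) !inE; case: ifP; rewrite ?inE.
by case: ifP; rewrite ?cardsT ?card_tuple ?cards0.
Qed.

Definition avoiders (p : seq T) n := #|[set t : n.-tuple T | ~~ subseq p t]|.

Lemma avoiders_nil n : avoiders [::] n = 0.
Proof. by apply/eqP; rewrite cards_eq0; apply/eqP/setP => t; rewrite !inE sub0seq. Qed.

Lemma avoiders_cons0 a p : avoiders (a :: p) 0 = 1.
Proof. exact: (card_tuples0 (fun s => ~~ subseq (a :: p) s)). Qed.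

Lemma avoiders_consS a p n :
  avoiders (a :: p) n.+1 = #|T|.-1 * avoiders (a :: p) n + avoiders p n.
Proof.
rewrite /avoiders (card_tuples_cons n (fun s => ~~ subseq (a :: p) s)) (bigD1 a) //=.
rewrite eqxx addnC; congr (_ + _).
rewrite -(cardC1 a) -sum_nat_const; apply: eq_big => [b|b /negbTE ba]; first by rewrite !inE.
by rewrite eq_sym ba.
Qed.

End Words.

Section ThreeLetters.

Context {T : finType}.
Hypothesis card_T : #|T| = 3.

Lemma avoiders_size1 (a : T) n : avoiders [:: a] n = 2 ^ n.
Proof.
elim: n => [|n IH]; first exact: avoiders_cons0.
by rewrite avoiders_consS avoiders_nil card_T IH expnS; lia.
Qed.

Lemma avoiders_size2 (a b : T) n : 2 * avoiders [:: a; b] n = 2 ^ n * (n + 2).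
Proof.
elim: n => [|n IH]; first by rewrite avoiders_cons0.
by rewrite avoiders_consS avoiders_size1 card_T expnS; lia.
Qed.

Lemma avoiders_size3 (a b c : T) n :
  8 * avoiders [:: a; b; c] n = 2 ^ n * (n ^ 2 + 3 * n + 8).
Proof.
elim: n => [|n IH]; first by rewrite avoiders_cons0.
by have := avoiders_size2 b c n; rewrite avoiders_consS card_T expnS; nia.
Qed.

End ThreeLetters.

Fixpoint covering_count m n k :=
  if n is n'.+1 then k * covering_count m n' k.-1 + (m - k) * covering_count m n' k
  else (k == 0 : nat).

Lemma covering_count3_0 n : covering_count 3 n 0 = 3 ^ n.
Proof. by elim: n => //= n ->; rewrite expnS. Qed.

Lemma covering_count3_1 n : covering_count 3 n 1 + 2 ^ n = 3 ^ n.
Proof. by elim: n => //= n IH; rewrite covering_count3_0 !expnS; lia. Qed.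

Lemma covering_count3_2 n : covering_count 3 n 2 + 2 * 2 ^ n = 3 ^ n + 1.
Proof. by elim: n => //= n IH; have := covering_count3_1 n; rewrite !expnS; lia. Qed.

Lemma covering_count3_3 n : 0 < n -> covering_count 3 n 3 + 3 * 2 ^ n = 3 ^ n + 3.
Proof. by case: n => //= n _; have := covering_count3_2 n; rewrite !expnS; lia. Qed.

Section Covering.

Context {T : finType}.

Definition coverers (S : {set T}) n := #|[set t : n.-tuple T | S \subset [set:: t]]|.

Lemma coverers0 S : coverers S 0 = (S == set0).
Proof. by rewrite /coverers (card_tuples0 (fun s => S \subset [set:: s])) subset0. Qed.

Lemma coverers_cons S n : coverers S n.+1 = \sum_(a : T) coverers (S :\ a) n.
Proof.
rewrite /coverers (card_tuples_cons n (fun s => S \subset [set:: s])).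
by apply: eq_bigr => a _; apply: eq_card => t; rewrite !inE set_cons subDset.
Qed.

Lemma card_coverers S n : coverers S n = covering_count #|T| n #|S|.
Proof.
elim: n S => [|n IH] S; first by rewrite coverers0 /= cards_eq0.
rewrite coverers_cons (bigID (mem S)) /=.
rewrite (eq_bigr (fun _ => covering_count #|T| n #|S|.-1)); last first.
  by move=> a aS; rewrite IH (cardsD1 a S) aS.
rewrite (eq_bigr (fun _ => covering_count #|T| n #|S|) (P := fun a => a \notin S)); last first.
  by move=> a /negbTE aS; rewrite IH (cardsD1 a S) aS.
rewrite !sum_nat_const; congr (_ + _ * _).
by rewrite -(cardsC S) addKn; apply: eq_card => a; rewrite inE.
Qed.

End Covering.

Section Blocks.

Context {n k : nat}.

Definition blocks_of (t : n.-tuple 'I_k) : {ffun 'I_k -> {set 'I_n}} :=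
  [ffun i => [set x | tnth t x == i]].

Lemma mem_blocks_of t i x : (x \in blocks_of t i) = (tnth t x == i).
Proof. by rewrite ffunE inE. Qed.

Lemma blocks_of_inj : injective blocks_of.
Proof.
move=> t u tu; apply: eq_from_tnth => x; apply/eqP.
by rewrite -mem_blocks_of tu mem_blocks_of.
Qed.

Lemma ordered_partition_blocks_of t :
  is_ordered_partition (blocks_of t) = ([set: 'I_k] \subset [set:: t]).
Proof.
apply/and3P/subsetP => [[/forallP nonempty _ _] i _|covered].
  case/set0Pn: (nonempty i) => x; rewrite mem_blocks_of inE => /eqP <-.
  exact: mem_tnth.
split.
- apply/forallP => i; have /tnthP [x ->] : i \in t by have := covered i; rewrite !inE; apply.
  by apply/set0Pn; exists x; rewrite mem_blocks_of.
- apply/forallP => i; apply/forallP => j; apply/implyP => ij.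
  rewrite disjoints_subset; apply/subsetP => x.
  by rewrite in_setC !mem_blocks_of => /eqP ->.
- apply/eqP/setP => x; rewrite inE; apply/bigcupP.
  by exists (tnth t x); rewrite ?mem_blocks_of.
Qed.

Lemma ordered_partitionP {B} : is_ordered_partition B -> exists t, B = blocks_of t.
Proof.
case/and3P => _ /forallP disj /eqP cover.
have [f f_block] : exists f : 'I_n -> 'I_k, forall x, x \in B (f x).
  apply: (@fin_all_exists _ (fun=> 'I_k) (fun x i => x \in B i)) => x.
  have /bigcupP [i _ xBi] : x \in \bigcup_(i < k) B i by rewrite cover inE.
  by exists i.
exists [tuple f x | x < n]; apply/ffunP => i; apply/setP => x.
rewrite mem_blocks_of tnth_mktuple; apply/idP/eqP => [xBi|<- //].
apply/eqP; apply: contraT => fxi.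
have /disjointFr/(_ (f_block x)) := implyP (forallP (disj (f x)) i) fxi.
by rewrite xBi.
Qed.

Lemma op_count_blocks_of rho :
  op_count n k rho = #|[set t : n.-tuple 'I_k |
    ([set: 'I_k] \subset [set:: t]) && ~~ op_contains (blocks_of t) rho]|.
Proof.
rewrite /op_count -(card_imset _ blocks_of_inj); apply: eq_card => B; rewrite inE.
apply/andP/imsetP => [[partB avoidB]|[t]].
  have [t defB] := ordered_partitionP partB.
  by exists t; rewrite // inE -ordered_partition_blocks_of -defB partB.
by rewrite inE -ordered_partition_blocks_of => /andP [? ?] ->.
Qed.

End Blocks.

(* Since the three block indices of a copy b_1 < b_3 < b_2 of 132 must be
   0, 1, 2, reading it in increasing order of elements gives the word 0 2 1. *)
Definition word021 : seq 'I_3 := [:: @Ordinal 3 0 isT; @Ordinal 3 2 isT; @Ordinal 3 1 isT].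

Lemma op_contains132_blocks_of n (t : n.-tuple 'I_3) :
  op_contains (blocks_of t) pat132 = subseq word021 t.
Proof.
have nth_t (x : 'I_n) : nth ord0 t x = tnth t x by rewrite (tnth_nth ord0).
apply/idP/idP.
  case/existsP => idx /existsP [b].
  case/and3P => /forallP idx_incr /forallP b_in /forallP b_ord.
  pose j0 : 'I_3 := ord0; pose j1 : 'I_3 := Ordinal (isT : 1 < 3).
  pose j2 : 'I_3 := ord_max.
  have chain3 u v w : u < v -> v < w -> w < 3 -> [/\ u = 0, v = 1 & w = 2].
    by move=> *; split; lia.
  have [idx0 idx1 idx2] := chain3 _ _ _ (implyP (forallP (idx_incr j0) j1) isT)
    (implyP (forallP (idx_incr j1) j2) isT) (ltn_ord (idx j2)).
  have tb j : val (tnth t (b j)) = idx j by have := b_in j; rewrite mem_blocks_of => /eqP ->.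
  apply/(subseq3P ord0); exists (b j0), (b j2), (b j1).
  rewrite (size_tuple t) ltn_ord !nth_t; split => //.
  - by rewrite (eqP (forallP (b_ord j0) j2)) (eqP (forallP (b_ord j2) j1)).
  - by split; apply: val_inj; rewrite /= tb.
case/(subseq3P ord0) => [x [z [y [/andP [xz zy] yn [tx tz ty]]]]].
rewrite (size_tuple t) in yn.
have xn : x < n by lia.
have zn : z < n by lia.
pose pos := [:: Ordinal xn; Ordinal yn; Ordinal zn].
apply/existsP; exists [ffun j => j].
apply/existsP; exists [ffun j : 'I_3 => nth (Ordinal xn) pos j].
apply/and3P; split.
- by apply/forallP => a; apply/forallP => c; rewrite !ffunE; apply/implyP.
- apply/forallP => -[[|[|[|j]]] lt_j3] //;
    by rewrite ffunE mem_blocks_of !ffunE -nth_t /= ?tx ?ty ?tz.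
- apply/forallP => -[[|[|[|a]]] lt_a3] //; apply/forallP => -[[|[|[|c]]] lt_c3] //;
    rewrite !ffunE /= ?ltnn //; apply/eqP; lia.
Qed.

Lemma subseq_word021_covers (s : seq 'I_3) :
  subseq word021 s -> [set: 'I_3] \subset [set:: s].
Proof.
move/mem_subseq => sub; apply/subsetP => i _; rewrite inE; apply: sub.
by case: i => -[|[|[|i]]] lt_i3; rewrite // !inE -!val_eqE.
Qed.

Lemma op_count132_avoiders n :
  0 < n -> op_count n 3 pat132 + 3 * 2 ^ n = avoiders word021 n + 3.
Proof.
move=> n_gt0; rewrite op_count_blocks_of.
set Cov := [set t : n.-tuple 'I_3 | [set: 'I_3] \subset [set:: t]].
set Av := [set t : n.-tuple 'I_3 | ~~ subseq word021 t].
rewrite (eq_card (B := Av :&: Cov)); last first.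
  by move=> t; rewrite !inE op_contains132_blocks_of andbC.
have uncov_avoid : Av :\: Cov = ~: Cov.
  apply/setP => t; rewrite !inE; apply: andb_idr; apply: contra; exact: subseq_word021_covers.
have card_Cov : #|Cov| = covering_count 3 n 3.
  by have := card_coverers [set: 'I_3] n; rewrite cardsT card_ord; apply.
have := cardsID Cov Av; rewrite uncov_avoid.
have := cardsC Cov; rewrite card_tuple card_ord.
have := covering_count3_3 n n_gt0.
rewrite /avoiders -/Av; lia.
Qed.

Import GRing.Theory Num.Theory.
Local Open Scope ring_scope.

Theorem theorem3 (n : nat) (hn : (0 < n)%N) :
  (op_count n 3 pat132)%:R
  = (((n ^ 2)%:R / 8 + 3%:R * n%:R / 8 - 2) * 2 ^+ n + 3 : rat).
Proof.
have count := op_count132_avoiders n hn.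
have avoid : (8 * avoiders word021 n = 2 ^ n * (n ^ 2 + 3 * n + 8))%N :=
  avoiders_size3 (card_ord 3) _ _ _ n.
move: count avoid => /(congr1 (fun m => m%:R : rat)) + /(congr1 (fun m => m%:R : rat)).
by rewrite !(natrD, natrM, natrX); lra.
Qed.
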